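(* The covering number of the lattice of integer flows satisfies $\mathrm{Cov}(\Lambda)=\max_D q(v^D)$, where $D$ ranges over the strongly connected orientations of $G^\circ$ (the graph $G$ with its bridges deleted) and $v^D\in H$ is the unique flow satisfying $2\langle v^D,x^C\rangle=q(x^C)$ for every circuit $C\subseteq D$.
   Context: $G=(V,E)$ is a finite connected graph, possibly with parallel edges and loops; $\mathbb E$ is the set of oriented edges ($e$ and its reverse $\bar e$). Real $1$-chains $x:\mathbb E\to\mathbb R$ satisfy $x_{\bar e}=-x_e$; $\langle x,y\rangle=\sum_{e\in E}x_ey_e$, $q(x)=\langle x,x\rangle$. A flow satisfies $\sum_{e\text{ with tail }v}x_e=0$ at every vertex $v$; $H$ is the space of real flows and $\Lambda$ the lattice of integer flows. A circuit is an orientation of a cycle as a directed cycle; $x^C_e=1$ if $e\in C$, $-1$ if $\bar e\in C$, $0$ otherwise. An orientation is strongly connected if on each connected component any two vertices are joined by directed paths in both directions. For a full-rank lattice $\mathcal L$ in a real vector space with positive quadratic form $q$, the covering number $\mathrm{Cov}(\mathcal L)$ is the smallest $r$ such that for every point $x$ there is $m\in\mathcal L$ with $q(x-m)\le r$. *)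

From mathcomp Require Import all_boot.
From Stdlib Require Import Reals ZArith.
Set Implicit Arguments. Unset Strict Implicit. Unset Printing Implicit Defensive.

Section Graph.
(* A finite graph with parallel edges and loops: vertex set V, edge set E,
   each edge e has a reference orientation from [tl e] to [hd e]. *)
Variables (V E : finType) (tl hd : E -> V).

(* Oriented edges: (e, true) = e, (e, false) = reverse of e. *)
Definition otail (p : E * bool) : V := if p.2 then tl p.1 else hd p.1.
Definition ohead (p : E * bool) : V := if p.2 then hd p.1 else tl p.1.

Definition adj_in (keep : pred E) : rel V :=
  fun u w => [exists e, keep e &&
     (((tl e == u) && (hd e == w)) || ((tl e == w) && (hd e == u)))].

Definition connected_graph : Prop := forall u w : V, connect (adj_in predT) u w.

Definition bridge (e : E) : bool :=
  ~~ connect (adj_in (fun e' => e' != e)) (tl e) (hd e).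

(* An orientation of G° (G with bridges deleted): a choice of direction for
   each edge; [D e = true] means e keeps its reference orientation. Only the
   values on non-bridge edges matter. *)
Definition darc (D : E -> bool) : rel V :=
  fun u w => [exists e, ~~ bridge e &&
     (if D e then (tl e == u) && (hd e == w) else (hd e == u) && (tl e == w))].

Definition strongly_connected_orientation (D : E -> bool) : Prop :=
  forall u w : V, connect (adj_in (fun e => ~~ bridge e)) u w -> connect (darc D) u w.

(* Real 1-chains, represented by their values on reference orientations
   (so x_{\bar e} = - x_e). *)
Definition chain := E -> R.

Definition oval (x : chain) (p : E * bool) : R := if p.2 then x p.1 else (- x p.1)%R.

Definition inner (x y : chain) : R := \big[Rplus/0%R]_(e : E) (x e * y e)%R.
Definition qf (x : chain) : R := inner x x.

Definition is_flow (x : chain) : Prop :=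
  forall v : V, \big[Rplus/0%R]_(p : E * bool | otail p == v) oval x p = 0%R.

Definition is_int_flow (x : chain) : Prop :=
  is_flow x /\ forall e, exists z : Z, x e = IZR z.

Definition is_circuit (c : seq (E * bool)) : Prop :=
  c <> [::] /\ uniq (map fst c) /\ uniq (map otail c) /\
  cycle (fun p p' => ohead p == otail p') c.

Definition xC (c : seq (E * bool)) : chain :=
  fun e => if (e, true) \in c then 1%R else if (e, false) \in c then (-1)%R else 0%R.

Definition circuit_in (D : E -> bool) (c : seq (E * bool)) : Prop :=
  is_circuit c /\ forall p, p \in c -> ~~ bridge p.1 /\ p.2 = D p.1.

Definition vD_prop (D : E -> bool) (v : chain) : Prop :=
  forall c, circuit_in D c -> (2 * inner v (xC c))%R = qf (xC c).

Definition covers (r : R) : Prop :=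
  forall x, is_flow x -> exists m, is_int_flow m /\ (qf (fun e => x e - m e) <= r)%R.

Definition is_covering_number (r : R) : Prop :=
  covers r /\ forall r', covers r' -> (r <= r')%R.

End Graph.

Definition is_greatest (P : R -> Prop) (m : R) : Prop :=
  P m /\ forall r, P r -> (r <= m)%R.

(* Let [proj] be the orthogonal projection onto the flow space H and
   v^D = proj (sign_chain D) / 2, where [sign_chain D] is the +-1 chain of the
   orientation D. On a circuit of D the chain [sign_chain D] is identically 1, which
   gives the circuit equations; conversely, when D is strongly connected a flow
   orthogonal to all circuits of D is a tension, hence 0, so they determine v^D.

   For an integer flow m, 2 <v^D, m> = <sign_chain D, m> <= q(m), so no lattice point
   is closer to v^D than 0. Conversely let m be an integer flow nearest to a flow x and
   y = x - m. Adding a circuit to m does not bring it closer to x, so the arc lengths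
   1 - 2y have nonnegative sum around every cycle and admit a potential phi. Then
   z = 2y + d(phi) lies in the cube [-1,1]^E and proj z = 2y; since q o proj is
   convex it is maximal on the cube at some vertex sign_chain D, hence q(y) <= q(v^D).

   Finally an orientation maximising q(v^D) is strongly connected: otherwise reversing
   single edges e of a directed cut changes q(v^D) by q(proj 1_e) minus terms summing
   to 0 over the cut, and q(proj 1_e) > 0 for a non-bridge e. *)

From Stdlib Require Import Reals ZArith Lra Lia Psatz.
From Stdlib Require Import Classical ClassicalEpsilon FunctionalExtensionality.
From HB Require Import structures.
From Pilot Require Import Defs.
From mathcomp Require Import all_boot.
Set Implicit Arguments. Unset Strict Implicit. Unset Printing Implicit Defensive.

(* MathComp rebinds the key [%R] to its ring scope. *)
Delimit Scope R_scope with R.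

Lemma Rplus_idl : left_id 0%R Rplus. Proof. move=> x; ring. Qed.
Lemma Rplus_A : associative Rplus. Proof. move=> x y z; ring. Qed.
Lemma Rplus_C : commutative Rplus. Proof. move=> x y; ring. Qed.
HB.instance Definition _ := Monoid.isComLaw.Build R 0%R Rplus Rplus_A Rplus_C Rplus_idl.
Lemma Rmult_idl : left_id 1%R Rmult. Proof. move=> x; ring. Qed.
Lemma Rmult_A : associative Rmult. Proof. move=> x y z; ring. Qed.
Lemma Rmult_C : commutative Rmult. Proof. move=> x y; ring. Qed.
Lemma Rmult_0l : left_zero 0%R Rmult. Proof. move=> x; ring. Qed.
Lemma Rmult_0r : right_zero 0%R Rmult. Proof. move=> x; ring. Qed.
HB.instance Definition _ := Monoid.isComLaw.Build R 1%R Rmult Rmult_A Rmult_C Rmult_idl.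
HB.instance Definition _ := Monoid.isMulLaw.Build R 0%R Rmult Rmult_0l Rmult_0r.
Lemma Rmult_Dl : left_distributive Rmult Rplus. Proof. move=> x y z; ring. Qed.
Lemma Rmult_Dr : right_distributive Rmult Rplus. Proof. move=> x y z; ring. Qed.
HB.instance Definition _ := Monoid.isAddLaw.Build R Rmult Rplus Rmult_Dl Rmult_Dr.

Open Scope R_scope.

(* [big_distrr] rewritten right to left leaves the operator of the [Monoid.law]
   structure in place of [Rmult], which [ring] and [lra] do not recognise. *)
Lemma sumR_distrr (I : Type) (r : seq I) (P : pred I) (a : R) (F : I -> R) :
  \big[Rplus/0]_(i <- r | P i) (a * F i) = a * \big[Rplus/0]_(i <- r | P i) F i.
Proof. by rewrite big_distrr. Qed.

Lemma sumR_ge0 (I : Type) (r : seq I) (P : pred I) (F : I -> R) :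
  (forall i, P i -> 0 <= F i) -> 0 <= \big[Rplus/0]_(i <- r | P i) F i.
Proof. by move=> F_ge0; elim/big_rec: _ => [|i x Pi]; [lra | have := F_ge0 i Pi; lra]. Qed.

Lemma sumR_le (I : Type) (r : seq I) (P : pred I) (F G : I -> R) :
  (forall i, P i -> F i <= G i) ->
  \big[Rplus/0]_(i <- r | P i) F i <= \big[Rplus/0]_(i <- r | P i) G i.
Proof. by move=> FG; elim/big_rec2: _ => [|i x y Pi]; [lra | have := FG i Pi; lra]. Qed.

Lemma sumR_ge_term (I : eqType) (r : seq I) (F : I -> R) i :
  i \in r -> (forall j, j \in r -> 0 <= F j) -> F i <= \big[Rplus/0]_(j <- r) F j.
Proof.
move=> ir F_ge0; rewrite (big_rem i ir) /= big_seq.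
have := @sumR_ge0 _ (rem i r) (fun j => j \in rem i r) F (fun j jr => F_ge0 j (mem_rem jr)).
lra.
Qed.

Lemma seq_argmin (T : eqType) (s : seq T) (P : T -> Prop) (f : T -> R) :
  (exists2 x, x \in s & P x) ->
  exists x, [/\ x \in s, P x & forall y, y \in s -> P y -> f x <= f y].
Proof.
elim: s => [|a s IH] [x]; first by [].
case: (classic (exists2 y, y \in s & P y)) => [/IH [m [ms Pm m_min]] _ _|no_P].
  case: (classic (P a /\ f a <= f m)) => [[Pa am]|not_a].
    exists a; split; rewrite ?mem_head // => y; rewrite in_cons => /orP [/eqP -> //|ys] Py.
      lra.
    have := m_min y ys Py; lra.
  exists m; split; rewrite ?in_cons ?ms ?orbT // => y /orP [/eqP -> Pa|]; last exact: m_min.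
  by apply: Rnot_lt_le => lt_a; apply: not_a; split; [|lra].
rewrite in_cons => /orP [/eqP -> Pa|xs Px]; last by case: no_P; exists x.
exists a; split; rewrite ?mem_head // => y; rewrite in_cons => /orP [/eqP -> //|ys Py]; first lra.
by case: no_P; exists y.
Qed.

Lemma fin_argmin (T : finType) (P : T -> Prop) (f : T -> R) :
  (exists x, P x) -> exists x, P x /\ forall y, P y -> f x <= f y.
Proof.
case=> x Px; have [|m [_ Pm m_min]] := @seq_argmin _ (enum T) P f.
  by exists x; rewrite ?mem_enum.
by exists m; split=> // y; apply: m_min; rewrite mem_enum.
Qed.

Lemma sqr_le_bound t Q : t * t <= Q -> - (Q + 1) <= t <= Q + 1.
Proof. by move=> tQ; split; nra. Qed.

Lemma connect_cross (T : finType) (r : rel T) (S : pred T) a b :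
  connect r a b -> S a -> ~~ S b -> exists v w, [/\ r v w, S v & ~~ S w].
Proof.
move=> /connectP [s ab_path ->]; elim: s a ab_path => [|w s IH] a /=; first by move=> _ ->.
case/andP=> aw w_path Sa; case Sw: (S w); first exact: IH.
by exists a, w; rewrite Sw.
Qed.

Lemma exists_nat_gt r : exists K : nat, r < INR K.
Proof.
have [up_gt _] := archimed (Rabs r); have r_abs := Rle_abs r; have abs_ge0 := Rabs_pos r.
have up_ge0 : (0 <= up (Rabs r))%Z by apply: le_IZR; lra.
by exists (Z.to_nat (up (Rabs r))); rewrite INR_IZR_INZ Z2Nat.id //; lra.
Qed.

Fixpoint seqs_upto (T : finType) (n : nat) : seq (seq T) :=
  if n is n'.+1 then [::] :: [seq x :: s | x <- enum T, s <- seqs_upto T n'] else [:: [::]].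

Lemma mem_seqs_upto (T : finType) n (s : seq T) : (size s <= n)%N -> s \in seqs_upto T n.
Proof.
elim: n s => [|n IH] [|x s] //= le_s_n.
by rewrite in_cons; apply/orP; right; apply: allpairs_f; [exact: mem_enum | exact: IH].
Qed.

Section Chains.
Variable E : finType.
Local Notation chain := (chain E).
Implicit Types (x y z : chain).

Lemma eq_inner x x' y y' :
  (forall e, x e = x' e) -> (forall e, y e = y' e) -> inner x y = inner x' y'.
Proof. by move=> xx' yy'; apply: eq_bigr => e _; rewrite xx' yy'. Qed.

Lemma inner_sym x y : inner x y = inner y x.
Proof. by apply: eq_bigr => e _; ring. Qed.

Lemma inner_lin a b x y z :
  inner (fun e => a * x e + b * y e) z = a * inner x z + b * inner y z.
Proof. by rewrite /inner !big_distrr -big_split; apply: eq_bigr => e _ /=; ring. Qed.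

Lemma inner_scale a x z : inner (fun e => a * x e) z = a * inner x z.
Proof. by rewrite /inner big_distrr; apply: eq_bigr => e _ /=; ring. Qed.

Lemma inner_sub x y z : inner (fun e => x e - y e) z = inner x z - inner y z.
Proof.
rewrite (@eq_inner _ (fun e => 1 * x e + (-1) * y e) z z) ?inner_lin //; first ring.
by move=> e; ring.
Qed.

Lemma inner0 z : inner (fun _ => 0) z = 0.
Proof. by rewrite /inner big1 // => e _; ring. Qed.

Lemma qf_ge0 x : 0 <= qf x.
Proof. by apply: sumR_ge0 => e _; nra. Qed.

Lemma sqr_le_qf x e : x e * x e <= qf x.
Proof. by apply: (sumR_ge_term (F := fun e => x e * x e)) => [|i _]; [rewrite mem_index_enum | nra]. Qed.

Lemma qf_eq0 x : qf x = 0 -> forall e, x e = 0.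
Proof. by move=> x0 e; have := sqr_le_qf x e; rewrite x0; nra. Qed.

Lemma qf_lin a b x y :
  qf (fun e => a * x e + b * y e) = a * a * qf x + 2 * a * b * inner x y + b * b * qf y.
Proof.
rewrite /qf /inner !big_distrr -!big_split; apply: eq_bigr => e _ /=; ring.
Qed.

Lemma qf_scale a x : qf (fun e => a * x e) = a * a * qf x.
Proof. by rewrite /qf /inner big_distrr; apply: eq_bigr => e _ /=; ring. Qed.

Lemma qf_sub x y : qf (fun e => x e - y e) = qf x - 2 * inner x y + qf y.
Proof.
have xy e : x e - y e = 1 * x e + -1 * y e by ring.
rewrite /qf (eq_inner xy xy) -/(qf _) qf_lin /qf; ring.
Qed.

Lemma qf_convex t x y : 0 <= t <= 1 ->
  qf (fun e => t * x e + (1 - t) * y e) <= t * qf x + (1 - t) * qf y.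
Proof.
move=> t01; rewrite /qf /inner !big_distrr -big_split; apply: sumR_le => e _ /=.
have := Rmult_le_pos _ _ (Rmult_le_pos t (1 - t) ltac:(lra) ltac:(lra)) (Rle_0_sqr (x e - y e)).
rewrite /Rsqr; nra.
Qed.

(** * Spans *)

Fixpoint in_span (s : seq chain) x : Prop :=
  if s is a :: s' then exists t, in_span s' (fun e => x e - t * a e) else forall e, x e = 0.

Lemma eq_in_span s x x' : (forall e, x e = x' e) -> in_span s x -> in_span s x'.
Proof.
elim: s x x' => [|a s IH] x x' xx' /=; first by move=> x0 e; rewrite -xx'.
by case=> t xt; exists t; apply: IH xt => e; rewrite xx'.
Qed.

Lemma in_span_lin s a b x y :
  in_span s x -> in_span s y -> in_span s (fun e => a * x e + b * y e).
Proof.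
elim: s x y => [|c s IH] x y /=; first by move=> x0 y0 e; rewrite x0 y0; ring.
case=> t1 xt1 [t2 yt2]; exists (a * t1 + b * t2).
by apply: eq_in_span (IH _ _ xt1 yt2) => e; ring.
Qed.

Lemma in_span_cons a s x : in_span s x -> in_span (a :: s) x.
Proof. by move=> sx; exists 0; apply: eq_in_span sx => e; ring. Qed.

Lemma in_span_orth (I : eqType) (g : I -> chain) (s : seq I) w x :
  (forall i, i \in s -> inner w (g i) = 0) -> in_span (map g s) x -> inner w x = 0.
Proof.
elim: s x => [|i s IH] x /= w_s.
  by move=> x0; rewrite (@eq_inner w w x (fun _ => 0)) // inner_sym inner0.
case=> t xt; have := IH _ (fun j sj => w_s j (mem_behead (s := i :: s) sj)) xt.
rewrite inner_sym inner_sub inner_scale inner_sym (inner_sym (g i)) w_s ?mem_head //; lra.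
Qed.

(* Gram-Schmidt: with [p'] and [pa] the projections of [z] and [g i] on the span of
   [map g s], that on the span of [g i :: map g s] adds the component of [z - p'] along
   [g i - pa]. *)
Lemma exists_span_proj (I : eqType) (g : I -> chain) (s : seq I) z :
  exists2 p, in_span (map g s) p & forall i, i \in s -> inner (fun e => z e - p e) (g i) = 0.
Proof.
elim: s z => [|i s IH] z; first by exists (fun _ => 0).
have [p' sp' z_orth] := IH z; have [pa spa a_orth] := IH (g i).
pose a' e := g i e - pa e.
have zpa0 : inner (fun e => z e - p' e) pa = 0 by apply: in_span_orth spa.
have [a'0|a'_neq0] := Req_dec (qf a') 0.
  exists p'; first exact: in_span_cons.
  move=> j; rewrite in_cons => /orP [/eqP ->|sj]; last exact: z_orth.
  rewrite -zpa0; apply: eq_inner => // e; have := qf_eq0 a'0 e; rewrite /a'; lra.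
pose t := inner (fun e => z e - p' e) a' / qf a'.
have Ez b : inner (fun e => z e - (p' e + t * a' e)) b
            = inner (fun e => z e - p' e) b - t * inner a' b.
  by rewrite -inner_scale -inner_sub; apply: eq_inner => // e; ring.
exists (fun e => p' e + t * a' e).
  by exists t; apply: eq_in_span (in_span_lin 1 (- t) sp' spa) => e; rewrite /a'; ring.
have z_s j : j \in s -> inner (fun e => z e - (p' e + t * a' e)) (g j) = 0.
  by move=> sj; rewrite Ez z_orth ?a_orth //; ring.
move=> j; rewrite in_cons => /orP [/eqP ->|]; last exact: z_s.
have a_eq e : g i e = 1 * a' e + 1 * pa e by rewrite /a'; ring.
rewrite (eq_inner (fun _ => erefl) a_eq).
rewrite inner_sym inner_lin !(inner_sym _ (fun e => z e - _)) (in_span_orth z_s spa) Ez.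
by rewrite /t /qf; field_simplify; [ring | exact: a'_neq0].
Qed.

(** * Edge, sign and integer chains *)

Definition edge_chain (e0 : E) : chain := fun e => if e == e0 then 1 else 0.

Lemma inner_edge_chain e0 x : inner (edge_chain e0) x = x e0.
Proof.
rewrite /inner (eq_bigr (fun e => if e == e0 then x e else 0)) => [|e _]; last first.
  by rewrite /edge_chain; case: (e == e0); ring.
by rewrite -big_mkcond big_pred1_eq.
Qed.

Definition sign_chain (D : E -> bool) : chain := fun e => if D e then 1 else -1.

(* The coordinates of [z] are made [+1] or [-1] one at a time, each time moving to the
   endpoint of a segment through [z] where [F] is larger. *)
Lemma convex_cube_vertex (F : chain -> R) :
  (forall t x y, 0 <= t <= 1 -> F (fun e => t * x e + (1 - t) * y e) <= t * F x + (1 - t) * F y) ->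
  forall z, (forall e, -1 <= z e <= 1) -> exists D : {ffun E -> bool}, F z <= F (sign_chain D).
Proof.
move=> F_convex.
suff vertex_from (l : seq E) z : (forall e, -1 <= z e <= 1) ->
    (forall e, e \notin l -> z e = 1 \/ z e = -1) -> exists D : {ffun E -> bool}, F z <= F (sign_chain D).
  by move=> z z_cube; apply: (vertex_from (enum E)) => // e; rewrite mem_enum.
elim: l z => [|e0 l IH] z z_cube z_vertex.
  pose D := [ffun e => if Rle_dec 0 (z e) then true else false].
  exists D; suff -> : z = sign_chain D by lra.
  apply: functional_extensionality => e; have := z_vertex e isT.
  by rewrite /sign_chain ffunE; case: Rle_dec => /=; lra.
pose z_ (w : R) e := if e == e0 then w else z e.
have z_cube_ (w : R) : -1 <= w <= 1 -> forall e, -1 <= z_ w e <= 1.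
  by move=> w01 e; rewrite /z_; case: (e == e0).
have z_vertex_ (w : R) : w = 1 \/ w = -1 -> forall e, e \notin l -> z_ w e = 1 \/ z_ w e = -1.
  move=> w_pm e e_l; rewrite /z_; case: (eqVneq e e0) => [//|e_e0].
  by apply: z_vertex; rewrite in_cons negb_or e_e0.
have [D1 le1] := IH (z_ 1) (z_cube_ 1 ltac:(lra)) (z_vertex_ 1 (or_introl erefl)).
have [D2 le2] := IH (z_ (-1)) (z_cube_ (-1) ltac:(lra)) (z_vertex_ (-1) (or_intror erefl)).
pose t := (1 + z e0) / 2.
have t01 : 0 <= t <= 1 by have := z_cube e0; rewrite /t; lra.
have z_mid : z = (fun e => t * z_ 1 e + (1 - t) * z_ (-1) e).
  by apply: functional_extensionality => e; rewrite /z_ /t; case: (eqVneq e e0) => [->|_]; field.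
have := F_convex t (z_ 1) (z_ (-1)) t01; rewrite -z_mid => Fz.
by case: (Rle_dec (F (z_ (-1))) (F (z_ 1))) => cmp; [exists D1 | exists D2]; nra.
Qed.

Definition int_chain x : Prop := forall e, exists k : Z, x e = IZR k.

Lemma inner_sign_chain_le D m : int_chain m -> inner (sign_chain D) m <= qf m.
Proof.
move=> m_int; apply: sumR_le => e _; have [k ->] := m_int e.
have : IZR k <= IZR k * IZR k /\ - IZR k <= IZR k * IZR k.
  by rewrite -mult_IZR -opp_IZR; split; apply: IZR_le; nia.
by rewrite /sign_chain; case: (D e); lra.
Qed.

Lemma closer_chain_bound x y e :
  qf (fun e => x e - y e) <= qf x -> - (2 * qf x + 2) <= y e <= 2 * qf x + 2.
Proof.
move=> closer; have := sqr_le_bound (sqr_le_qf x e).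
by have := sqr_le_bound (Rle_trans _ _ _ (sqr_le_qf (fun e => x e - y e) e) closer); lra.
Qed.

(* Integer chains with coordinates in [(-K, K)] are coded by [{ffun E -> 'I_(2K+1)}]. *)
Definition decode_chain K (f : {ffun E -> 'I_(K + K).+1}) : chain :=
  fun e => IZR (Z.of_nat (f e) - Z.of_nat K).

Lemma decode_chain_int K (f : {ffun E -> 'I_(K + K).+1}) : int_chain (decode_chain f).
Proof. by move=> e; eexists. Qed.

Lemma decode_chainP K x : int_chain x -> (forall e, - INR K < x e < INR K) ->
  exists f : {ffun E -> 'I_(K + K).+1}, forall e, decode_chain f e = x e.
Proof.
move=> /(ClassicalEpsilon.choice _) [k xk] x_bound.
have k_bound e : (- Z.of_nat K < k e < Z.of_nat K)%Z.
  by have := x_bound e; rewrite xk INR_IZR_INZ -opp_IZR; case=> /lt_IZR ? /lt_IZR; lia.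
exists [ffun e => inord (Z.to_nat (k e + Z.of_nat K))] => e; rewrite /decode_chain ffunE inordK.
  by rewrite xk Z2Nat.id; [congr IZR; lia | have := k_bound e; lia].
apply/ltP/Nat2Z.inj_lt; rewrite Z2Nat.id -?plusE; have := k_bound e; lia.
Qed.

End Chains.

Section Graph.
Variables (V E : finType) (tl hd : E -> V).
Local Notation otl := (Defs.otail tl hd).
Local Notation ohd := (Defs.ohead tl hd).
Local Notation flow := (is_flow tl hd).
Local Notation bridge := (bridge tl hd).
Local Notation chain := (chain E).
Implicit Types (x y z u : chain) (c : seq (E * bool)).

(** * Flows, tensions and the projection onto flows *)

Definition star (v : V) : chain :=
  fun e => (if tl e == v then 1 else 0) - (if hd e == v then 1 else 0).

Lemma flowP x : flow x <-> forall v, inner x (star v) = 0.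
Proof.
have net_star v : \big[Rplus/0]_(p : E * bool | otl p == v) oval x p = inner x (star v).
  rewrite big_mkcond -(pair_bigA _ (fun e b => if otl (e, b) == v then oval x (e, b) else 0)).
  apply: eq_bigr => e _; rewrite big_bool /= /oval /star /=.
  by case: (tl e == v); case: (hd e == v); ring.
by split=> x0 v; [rewrite -net_star; apply: x0 | rewrite net_star].
Qed.

Lemma eq_flow x x' : (forall e, x e = x' e) -> flow x -> flow x'.
Proof. by move=> /functional_extensionality ->. Qed.

Lemma flow_lin a b x y : flow x -> flow y -> flow (fun e => a * x e + b * y e).
Proof. by move=> /flowP x0 /flowP y0; apply/flowP => v; rewrite inner_lin x0 y0; ring. Qed.

Definition tension (phi : V -> R) : chain := fun e => phi (hd e) - phi (tl e).

Lemma tension_star phi e : tension phi e = \big[Rplus/0]_v (- phi v * star v e).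
Proof.
rewrite /star (eq_bigr (fun v => (if v == tl e then - phi v else 0) + (if v == hd e then phi v else 0))).
  by rewrite big_split /= -!big_mkcond !big_pred1_eq /tension; ring.
by move=> v _; rewrite ![_ == v]eq_sym; case: (v == tl e); case: (v == hd e); ring.
Qed.

Lemma inner_flow_tension u phi : flow u -> inner u (tension phi) = 0.
Proof.
move=> /flowP u0; rewrite (eq_inner (fun _ => erefl) (tension_star phi)) /inner.
under eq_bigr => e _ do rewrite big_distrr.
rewrite exchange_big big1 //= => v _.
rewrite (eq_bigr (fun e => - phi v * (u e * star v e))); last by move=> e _; ring.
by rewrite sumR_distrr; have := u0 v; rewrite /inner => ->; ring.
Qed.

Lemma adj_inC keep v w : adj_in tl hd keep v w = adj_in tl hd keep w v.
Proof. by apply/existsP/existsP => -[e He]; exists e; rewrite orbC. Qed.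

(* The indicator of the side of [tl e] in [G - e] is a potential whose tension is
   supported on the bridge [e]. *)
Lemma flow_bridge u e : flow u -> bridge e -> u e = 0.
Proof.
move=> flow_u; rewrite /Defs.bridge => e_bridge.
pose side v := connect (adj_in tl hd (fun e' => e' != e)) (tl e) v.
have := inner_flow_tension (fun v => if side v then 1 else 0) flow_u.
rewrite /inner (bigD1 e) //= big1 => [|e' e'e].
  by rewrite /tension /side connect0 (negbTE e_bridge); lra.
have adj_e' : adj_in tl hd (fun e'' => e'' != e) (tl e') (hd e').
  by apply/existsP; exists e'; rewrite e'e !eqxx.
rewrite /tension; suff -> : side (hd e') = side (tl e') by ring.
apply/idP/idP => side_e'; apply: connect_trans side_e' (connect1 _) => //.
by rewrite adj_inC.
Qed.


Lemma exists_flow_proj z :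
  exists y, flow y /\ forall h, flow h -> inner (fun e => z e - y e) h = 0.
Proof.
have [p sp p_orth] := exists_span_proj star (enum V) z.
have zpp e : z e - (z e - p e) = p e by ring.
exists (fun e => z e - p e); split; first by apply/flowP => v; apply: p_orth; rewrite mem_enum.
move=> h /flowP h0; rewrite (eq_inner zpp (fun _ => erefl)) inner_sym.
by apply: in_span_orth sp => v _; apply: h0.
Qed.

Definition proj z : chain :=
  proj1_sig (constructive_indefinite_description _ (exists_flow_proj z)).

Lemma proj_spec z :
  flow (proj z) /\ forall h, flow h -> inner (fun e => z e - proj z e) h = 0.
Proof. exact: proj2_sig (constructive_indefinite_description _ (exists_flow_proj z)). Qed.

Lemma proj_flow z : flow (proj z). Proof. by case: (proj_spec z). Qed.

Lemma proj_orth z h : flow h -> inner (fun e => z e - proj z e) h = 0.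
Proof. by case: (proj_spec z) => _; apply. Qed.

Lemma inner_proj z h : flow h -> inner z h = inner (proj z) h.
Proof. by move=> flow_h; have := proj_orth z flow_h; rewrite inner_sub; lra. Qed.

Lemma proj_unique z y : flow y -> (forall h, flow h -> inner (fun e => z e - y e) h = 0) ->
  forall e, proj z e = y e.
Proof.
move=> flow_y y_orth.
have flow_d : flow (fun e => 1 * proj z e + (-1) * y e) by apply: flow_lin => //; apply: proj_flow.
have d_eq e : 1 * proj z e + (-1) * y e = 1 * (z e - y e) + (-1) * (z e - proj z e) by ring.
suff /qf_eq0 d0 : qf (fun e => 1 * proj z e + (-1) * y e) = 0 by move=> e; have := d0 e; lra.
by rewrite /qf (eq_inner d_eq (fun _ => erefl)) inner_lin proj_orth // y_orth //; ring.
Qed.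

Lemma proj_lin a b z1 z2 e :
  proj (fun e => a * z1 e + b * z2 e) e = a * proj z1 e + b * proj z2 e.
Proof.
apply: (@proj_unique _ (fun e => a * proj z1 e + b * proj z2 e)) => [|h flow_h].
  by apply: flow_lin; apply: proj_flow.
have d_eq e' : a * z1 e' + b * z2 e' - (a * proj z1 e' + b * proj z2 e')
              = a * (z1 e' - proj z1 e') + b * (z2 e' - proj z2 e') by ring.
by rewrite (eq_inner d_eq (fun _ => erefl)) inner_lin !proj_orth //; ring.
Qed.

(** * Closed walks and circuits *)

Definition linked (p p' : E * bool) : bool := ohd p == otl p'.

Definition walk_chain c : chain :=
  fun e => \big[Rplus/0]_(p <- c) (if p.1 == e then (if p.2 then 1 else -1) else 0).

Lemma inner_walk_chain y c : inner y (walk_chain c) = \big[Rplus/0]_(p <- c) oval y p.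
Proof.
rewrite /inner /walk_chain.
under eq_bigr => e _ do rewrite -sumR_distrr.
rewrite exchange_big /=; apply: eq_bigr => p _.
rewrite (eq_bigr (fun e => if e == p.1 then y e * (if p.2 then 1 else -1) else 0)).
  by rewrite -big_mkcond big_pred1_eq /oval; case: p.2 => /=; ring.
by move=> e _; rewrite eq_sym; case: (e == p.1) => //; ring.
Qed.

Lemma walk_chain_int c : int_chain (walk_chain c).
Proof.
move=> e; rewrite /walk_chain; elim: c => [|p c [k IHk]]; first by exists 0%Z; rewrite big_nil.
rewrite big_cons IHk; case: (p.1 == e); last by exists k; ring.
by case: (p.2); [exists (1 + k)%Z | exists (-1 + k)%Z]; rewrite plus_IZR.
Qed.

Lemma sum_heads_tails (F : V -> R) c : cycle linked c ->
  \big[Rplus/0]_(p <- c) F (ohd p) = \big[Rplus/0]_(p <- c) F (otl p).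
Proof.
have heads_tails p s q : path linked p (rcons s q) -> map ohd (p :: s) = map otl (rcons s q).
  elim: s p => [|r s IH] p /=; first by rewrite andbT => /eqP ->.
  by move=> /andP [/eqP -> /IH /= ->].
case: c => [|p s] c_cycle; first by rewrite !big_nil.
have c_ht := heads_tails _ _ _ c_cycle; rewrite -(big_map ohd xpredT F) c_ht big_map.
by apply: perm_big; rewrite -rot1_cons perm_rot.
Qed.

Lemma walk_chain_flow c : cycle linked c -> flow (walk_chain c).
Proof.
move=> c_cycle; apply/flowP => v; rewrite inner_sym inner_walk_chain.
rewrite (eq_bigr (fun p => (if otl p == v then 1 else 0) + (-1) * (if ohd p == v then 1 else 0))).
  by rewrite big_split sumR_distrr /= (sum_heads_tails (fun w => if w == v then 1 else 0)) //; ring.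
by case=> e [] _; rewrite /oval /star /Defs.otail /Defs.ohead /=; ring.
Qed.

Lemma walk_chain_uniq c e : uniq c ->
  walk_chain c e = (if (e, true) \in c then 1 else 0) - (if (e, false) \in c then 1 else 0).
Proof.
elim: c => [|[f b] c IH] /=; first by move=> _; rewrite /walk_chain big_nil; ring.
case/andP=> fb_c /IH; rewrite /walk_chain big_cons /= => ->; rewrite !in_cons !xpair_eqE.
case: (eqVneq e f) => [->|_] /=; last by ring.
by case: b fb_c => /negbTE -> /=; ring.
Qed.

Lemma uniq_fst_orient c e : uniq (map fst c) -> (e, true) \in c -> (e, false) \in c -> False.
Proof.
elim: c => [|[f b] c IH] //= /andP [f_c /IH {}IH]; rewrite !in_cons !xpair_eqE.
have f_notin b' : (f, b') \in c -> False by move/(map_f fst); rewrite (negbTE f_c).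
case/orP=> [/andP [/eqP -> /eqP <-]|et].
  by case/orP=> [/andP [_ /eqP]|/f_notin].
case/orP=> [/andP [/eqP ef _]|]; last exact: IH.
by move: et; rewrite ef => /f_notin.
Qed.

Lemma xC_walk_chain c : uniq (map fst c) -> forall e, xC c e = walk_chain c e.
Proof.
move=> c_fst e; rewrite walk_chain_uniq ?(map_uniq c_fst) // /xC.
case et: ((e, true) \in c); case ef: ((e, false) \in c); try ring.
by case: (uniq_fst_orient c_fst et ef).
Qed.

Lemma qf_walk_chain_le c : uniq c -> qf (walk_chain c) <= \big[Rplus/0]_(p <- c) 1.
Proof.
move=> c_uniq; rewrite /qf inner_walk_chain; apply: sumR_le => -[e b] _.
rewrite /oval /= walk_chain_uniq //.
by case: ((e, true) \in c); case: ((e, false) \in c); case: b => /=; lra.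
Qed.

Lemma qf_walk_chain c : uniq (map fst c) -> qf (walk_chain c) = \big[Rplus/0]_(p <- c) 1.
Proof.
move=> c_fst; rewrite /qf inner_walk_chain big_seq [RHS]big_seq; apply: eq_bigr => -[e b] pc.
rewrite /oval /= walk_chain_uniq ?(map_uniq c_fst) //.
case: b pc => pc /=; rewrite pc.
  by case ef: ((e, false) \in c); [case: (uniq_fst_orient c_fst pc ef) | ring].
by case et: ((e, true) \in c); [case: (uniq_fst_orient c_fst et pc) | ring].
Qed.

(** * Potentials *)

Definition walk_to c (v : V) : bool :=
  if c is p :: s then path linked p s && (ohd (last p s) == v) else true.

Definition simple_walk (A : pred (E * bool)) c (v : V) : bool :=
  [&& all A c, walk_to c v & uniq (rcons (map otl c) v)].

Definition simple_cycle (A : pred (E * bool)) c : bool :=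
  [&& c != [::], all A c, cycle linked c & uniq (map otl c)].

Definition walk_len (l : E * bool -> R) c : R := \big[Rplus/0]_(p <- c) l p.

Lemma walk_to_cat c1 q s v : walk_to (c1 ++ q :: s) v = walk_to c1 (otl q) && walk_to (q :: s) v.
Proof. by case: c1 => [|p t] //=; rewrite cat_path last_cat /= /linked -!andbA. Qed.

Lemma walk_to_rcons c p : walk_to c (otl p) -> walk_to (rcons c p) (ohd p).
Proof.
case: c => [|q s] /=; first by rewrite eqxx.
by rewrite rcons_path last_rcons eqxx andbT /linked => ->.
Qed.

Lemma simple_walk_rcons A c p : simple_walk A c (otl p) -> A p ->
  ohd p \notin rcons (map otl c) (otl p) -> simple_walk A (rcons c p) (ohd p).
Proof.
case/and3P=> cA c_walk c_uniq Ap p_new; apply/and3P; split.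
- by rewrite all_rcons Ap cA.
- exact: walk_to_rcons.
- by rewrite map_rcons rcons_uniq p_new c_uniq.
Qed.

Lemma simple_walk_split A c1 q s p : simple_walk A (c1 ++ q :: s) (otl p) -> A p ->
  ohd p = otl q -> simple_walk A c1 (otl q) /\ simple_cycle A (q :: rcons s p).
Proof.
case/and3P=> cA c_walk c_uniq Ap pq.
move: c_walk cA c_uniq; rewrite walk_to_cat all_cat map_cat /= rcons_cat cat_uniq.
case/andP=> c1_walk /= /andP [qs_path /eqP qs_last] /andP [c1A /andP [Aq sA]].
case/and3P=> c1_uniq q_notin qs_uniq; split.
  apply/and3P; split => //; rewrite rcons_uniq c1_uniq andbT.
  by apply: contra q_notin => ->.
apply/and4P; split => //; first by rewrite /= all_rcons Ap Aq sA.
  by rewrite /cycle rcons_path rcons_path last_rcons qs_path /linked qs_last pq !eqxx.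
by rewrite /= map_rcons.
Qed.

Lemma simple_walk_close A c p : simple_walk A c (otl p) -> head (otl p) (map otl c) = ohd p ->
  A p -> simple_cycle A (rcons c p).
Proof.
case/and3P=> cA c_walk c_uniq c_from Ap; apply/and4P; split.
- by case: (c).
- by rewrite all_rcons Ap cA.
- case: c cA c_walk c_uniq c_from => [|q c] _ c_walk _ /= qp.
    by rewrite /linked qp eqxx.
  move: c_walk => /andP [qc_path /eqP qc_last].
  by rewrite rcons_path rcons_path last_rcons qc_path /linked qc_last qp !eqxx.
- by rewrite map_rcons.
Qed.

Lemma sub_simple_walk (A B : pred (E * bool)) c v :
  {subset A <= B} -> simple_walk A c v -> simple_walk B c v.
Proof. by move=> AB /and3P [cA ? ?]; apply/and3P; split => //; apply: sub_all cA. Qed.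

Lemma walk_len_rcons l c p : walk_len l (rcons c p) = walk_len l c + l p.
Proof. by rewrite /walk_len -cats1 big_cat big_seq1. Qed.

Lemma size_simple_walk A c v : simple_walk A c v -> (size c <= #|V|)%N.
Proof.
case/and3P=> _ _ /card_uniqP c_card.
by have := max_card (mem (rcons (map otl c) v)); rewrite c_card size_rcons size_map; apply: ltnW.
Qed.

Lemma exists_shortest_walk A l v : exists r, (exists2 c, simple_walk A c v & walk_len l c = r) /\
  forall c, simple_walk A c v -> r <= walk_len l c.
Proof.
have [|c [_ c_walk c_min]] := @seq_argmin _ (seqs_upto _ #|V|) (fun c => simple_walk A c v) (walk_len l).
  by exists [::]; first exact: mem_seqs_upto.
exists (walk_len l c); split; first by exists c.
by move=> c' c'_walk; apply: c_min => //; apply: mem_seqs_upto; apply: size_simple_walk c'_walk.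
Qed.

(* Bellman-Ford: the length of a shortest simple walk to each vertex is a potential. *)
Lemma exists_potential (A : pred (E * bool)) (l : E * bool -> R) :
  (forall c, simple_cycle A c -> 0 <= walk_len l c) ->
  exists phi : V -> R, forall p, A p -> phi (ohd p) <= phi (otl p) + l p.
Proof.
move=> cycle_ge0.
have [phi phi_spec] := ClassicalEpsilon.choice _ (exists_shortest_walk A l).
exists phi => p Ap.
have [[c c_walk c_len] _] := phi_spec (otl p); have [_ phi_min] := phi_spec (ohd p).
case p_new: (ohd p \in rcons (map otl c) (otl p)); last first.
  by have := phi_min _ (simple_walk_rcons c_walk Ap (negbT p_new)); rewrite walk_len_rcons c_len.
move: p_new; rewrite mem_rcons in_cons => /orP [/eqP p_loop|].
  have : simple_cycle A [:: p] by rewrite /simple_cycle /= Ap /linked p_loop !eqxx.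
  by move/cycle_ge0; rewrite /walk_len big_seq1 p_loop; lra.
case/mapP=> q q_in pq; move: c_walk c_len; case/splitPr: q_in => c1 s c_walk c_len.
have [c1_walk /cycle_ge0] := simple_walk_split c_walk Ap pq.
rewrite -[q :: rcons s p]/(rcons (q :: s) p) walk_len_rcons.
have := phi_min c1; rewrite pq => /(_ c1_walk).
by move: c_len; rewrite /walk_len big_cat /=; lra.
Qed.

Lemma connect_simple_walk (r : rel V) (A : pred (E * bool)) :
  (forall v w, r v w -> exists p, [/\ A p, otl p = v & ohd p = w]) ->
  forall a b, connect r a b -> exists2 c, simple_walk A c b & head b (map otl c) = a.
Proof.
move=> r_arc a b /connectP [s0 s0_path ->]; case: (shortenP s0_path) => s s_path s_uniq _.
suff [c [cA c_walk c_tails]] : exists c, [/\ all A c, walk_to c (last a s)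
                                            & rcons (map otl c) (last a s) = a :: s].
  exists c; first by apply/and3P; split; rewrite ?c_tails.
  by case: (c) c_tails => [|q c'] [].
elim: s a s_path {s_uniq s0_path} => [|w s IH] a /=; first by exists [::].
case/andP=> raw /IH [c [cA c_walk c_tails]]; have [p [Ap pa pw]] := r_arc _ _ raw.
exists (p :: c); split; rewrite /= ?Ap ?pa ?c_tails //.
case: c {cA} c_walk c_tails => [|q c] /= c_walk [qw _]; first by rewrite pw qw eqxx.
by rewrite /linked pw qw eqxx c_walk.
Qed.

Lemma flow_through_nonbridge e0 : ~~ bridge e0 -> exists2 h, flow h & h e0 = -1.
Proof.
rewrite /Defs.bridge negbK => /connect_simple_walk walk_e0.
have [|c c_walk c_from] := walk_e0 (fun p : E * bool => p.1 != e0).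
  move=> v w /existsP [e /andP [ee0 /orP [] /andP [/eqP <- /eqP <-]]].
    by exists (e, true).
  by exists (e, false).
have c_walkT := sub_simple_walk (B := predT) (fun _ _ => isT) c_walk.
have /and4P [_ _ c_cycle _] := simple_walk_close (p := (e0, false)) c_walkT c_from isT.
exists (walk_chain (rcons c (e0, false))); first exact: walk_chain_flow.
rewrite /walk_chain -cats1 big_cat big_seq1 big_seq_cond big1 /= ?eqxx => [|p /andP [pc _]].
  by ring.
by case/and3P: c_walk => /allP /(_ p pc) /negbTE ->.
Qed.

(** * The flows v^D *)

Definition vD (D : E -> bool) : chain := fun e => / 2 * proj (sign_chain D) e.

Lemma vD_flow D : flow (vD D).
Proof.
apply: eq_flow (flow_lin (/ 2) 0 (proj_flow (sign_chain D)) (proj_flow (sign_chain D))).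
by move=> e; rewrite /vD; ring.
Qed.

Definition D_arc (D : E -> bool) (p : E * bool) : bool := ~~ bridge p.1 && (p.2 == D p.1).

Lemma oval_sign_chain D p : D_arc D p -> oval (sign_chain D) p = 1.
Proof.
case: p => e b; rewrite /D_arc /= => /andP [_ /eqP ->].
by rewrite /oval /sign_chain /=; case: (D e); ring.
Qed.

(* [D] orients each edge one way only, so distinct tails force distinct edges. *)
Lemma circuit_inP D c : circuit_in tl hd D c <-> simple_cycle (D_arc D) c.
Proof.
split=> [[[c_ne [_ [c_tails c_cycle]]] c_D]|/and4P [c_ne cA c_cycle c_tails]].
  apply/and4P; split => //; first exact/eqP.
  by apply/allP => p /c_D [nb p_D]; rewrite /D_arc nb p_D eqxx.
split; last by move=> p /(allP cA) /andP [nb /eqP].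
split; first exact/eqP.
split=> //; rewrite map_inj_in_uniq ?(map_uniq c_tails) // => -[e b] [e' b'] pc p'c /= ee'.
by move: ee' (allP cA _ pc) (allP cA _ p'c) => <- /andP [_ /eqP /= ->] /andP [_ /eqP /= ->].
Qed.

Lemma vD_circuit D : vD_prop tl hd D (vD D).
Proof.
move=> c c_circ; have [[_ [c_fst _]] _] := c_circ.
case/circuit_inP/and4P: c_circ => _ cA c_cycle _.
rewrite (eq_inner (fun _ => erefl) (xC_walk_chain c_fst)).
rewrite /qf (eq_inner (xC_walk_chain c_fst) (xC_walk_chain c_fst)) -/(qf _) qf_walk_chain //.
rewrite /vD inner_scale -inner_proj ?inner_walk_chain; last exact: walk_chain_flow.
rewrite (eq_big_seq (fun _ => 1)) => [|p pc]; last by apply: oval_sign_chain; apply: (allP cA).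
by rewrite -Rmult_assoc Rinv_r ?Rmult_1_l //; lra.
Qed.

Lemma arc_in_simple_cycle D p : strongly_connected_orientation tl hd D -> D_arc D p ->
  exists2 c, simple_cycle (D_arc D) c & p \in c.
Proof.
move=> D_sc Ap.
have darc_arc v w : darc tl hd D v w -> exists q, [/\ D_arc D q, otl q = v & ohd q = w].
  case/existsP=> e /andP [nb vw]; exists (e, D e); rewrite /D_arc nb eqxx; move: vw.
  by rewrite /Defs.otail /Defs.ohead /=; case: (D e) => /andP [/eqP -> /eqP ->].
have back : connect (darc tl hd D) (ohd p) (otl p).
  apply: D_sc; apply: connect1; case: p Ap => e b /andP [nb /eqP /= ->].
  apply/existsP; exists e; rewrite nb /Defs.otail /Defs.ohead /=.
  by case: (D e); rewrite !eqxx ?orbT.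
have [c c_walk c_from] := connect_simple_walk darc_arc back.
by exists (rcons c p); [exact: simple_walk_close | rewrite mem_rcons mem_head].
Qed.

Lemma potential_tight (A : pred (E * bool)) l phi c :
  (forall p, A p -> phi (ohd p) <= phi (otl p) + l p) -> all A c -> cycle linked c ->
  walk_len l c = 0 -> forall p, p \in c -> phi (ohd p) = phi (otl p) + l p.
Proof.
move=> phi_pot cA c_cycle c_len0 p pc.
have slack_ge0 q : q \in c -> 0 <= phi (otl q) + l q - phi (ohd q).
  by move=> /(allP cA) /phi_pot; lra.
have : \big[Rplus/0]_(q <- c) (phi (otl q) + l q - phi (ohd q)) = 0.
  rewrite (eq_bigr (fun q => phi (otl q) + l q + (-1) * phi (ohd q))) => [|q _]; last ring.
  by rewrite !big_split sumR_distrr /= sum_heads_tails // -/(walk_len l c) c_len0; ring.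
move=> slack_sum0; have /= := sumR_ge_term pc slack_ge0; rewrite slack_sum0.
have := slack_ge0 p pc; lra.
Qed.

(* Strong connectivity puts every arc of [D] on a circuit, along which a potential for
   [oval u] is tight; so [u] is a tension, hence 0. *)
Lemma flow_orth_cycles_eq0 D u : strongly_connected_orientation tl hd D -> flow u ->
  (forall c, simple_cycle (D_arc D) c -> walk_len (oval u) c = 0) -> forall e, u e = 0.
Proof.
move=> D_sc flow_u u_orth.
have [phi phi_pot] := exists_potential (fun c c_cycle => Req_le _ _ (esym (u_orth c c_cycle))).
have u_tension e : ~~ bridge e -> u e = tension phi e.
  move=> nb; have Ap : D_arc D (e, D e) by rewrite /D_arc nb eqxx.
  have [c c_cycle pc] := arc_in_simple_cycle D_sc Ap.
  have c_len0 := u_orth _ c_cycle; case/and4P: c_cycle => _ cA c_link _.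
  have := potential_tight phi_pot cA c_link c_len0 pc.
  by rewrite /oval /tension /Defs.otail /Defs.ohead /=; case: (D e) => /=; lra.
suff /qf_eq0 : qf u = 0 by [].
rewrite /qf -(inner_flow_tension phi flow_u); apply: eq_bigr => e _.
by case nb: (bridge e); [rewrite (flow_bridge flow_u nb); ring | rewrite -u_tension ?nb].
Qed.

Lemma vD_unique D v : strongly_connected_orientation tl hd D -> flow v ->
  vD_prop tl hd D v -> v = vD D.
Proof.
move=> D_sc flow_v v_circ; apply: functional_extensionality => e.
suff : 1 * v e + (-1) * vD D e = 0 by lra.
apply: (@flow_orth_cycles_eq0 D (fun e => 1 * v e + (-1) * vD D e) D_sc).
  by apply: flow_lin => //; exact: vD_flow.
move=> c c_cycle; have c_circ : circuit_in tl hd D c by apply/circuit_inP.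
have [[_ [c_fst _]] _] := c_circ.
have := v_circ c c_circ; have := vD_circuit c_circ.
rewrite /walk_len -inner_walk_chain -(eq_inner (fun _ => erefl) (xC_walk_chain c_fst)) inner_lin.
lra.
Qed.

(** * The covering radius *)

Lemma qf_vD_le D m : is_int_flow tl hd m -> qf (vD D) <= qf (fun e => vD D e - m e).
Proof.
case=> flow_m m_int; rewrite qf_sub.
have := inner_sign_chain_le D m_int; rewrite (inner_proj _ flow_m).
suff -> : inner (vD D) m = / 2 * inner (proj (sign_chain D)) m by lra.
exact: inner_scale.
Qed.

Lemma exists_nearest_int_flow x : flow x -> exists m, is_int_flow tl hd m /\
  forall m', is_int_flow tl hd m' -> qf (fun e => x e - m e) <= qf (fun e => x e - m' e).
Proof.
move=> flow_x; have [K K_gt] := exists_nat_gt (2 * qf x + 2); have := qf_ge0 x => qf_x_ge0.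
have [f0 f0_0] : exists f0 : {ffun E -> 'I_(K + K).+1}, forall e, decode_chain f0 e = 0.
  by apply: decode_chainP => e; [exists 0%Z | lra].
have flow_f0 : flow (decode_chain f0).
  by apply: eq_flow (flow_lin 0 0 flow_x flow_x) => e; rewrite f0_0; ring.
have [|f [flow_f f_min]] := @fin_argmin _ (fun f : {ffun E -> 'I_(K + K).+1} => flow (decode_chain f))
                                        (fun f => qf (fun e => x e - decode_chain f e)).
  by exists f0.
exists (decode_chain f); split; first by split; [|exact: decode_chain_int].
move=> m' [flow_m' m'_int].
have f_le_x : qf (fun e => x e - decode_chain f e) <= qf x.
  have x_f0 e : x e - decode_chain f0 e = x e by rewrite f0_0; ring.
  by have := f_min f0 flow_f0; rewrite /qf (eq_inner x_f0 x_f0).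
case: (Rle_dec (qf x) (qf (fun e => x e - m' e))) => [|/Rnot_le_lt m'_closer]; first lra.
have m'_bound e : - INR K < m' e < INR K.
  by have := closer_chain_bound e (Rlt_le _ _ m'_closer); lra.
have [f' f'_m'] := decode_chainP m'_int m'_bound.
have := f_min f' (eq_flow (fun e => esym (f'_m' e)) flow_m').
by rewrite (functional_extensionality _ _ f'_m').
Qed.

(* A nearest integer flow cannot be improved by adding a circuit. *)
Lemma nearest_cycle_ge0 x m : is_int_flow tl hd m ->
  (forall m', is_int_flow tl hd m' -> qf (fun e => x e - m e) <= qf (fun e => x e - m' e)) ->
  forall c, simple_cycle predT c -> 0 <= walk_len (fun p => 1 - 2 * oval (fun e => x e - m e) p) c.
Proof.
move=> [flow_m m_int] m_min c /and4P [_ _ c_cycle c_tails].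
set y := fun e => x e - m e.
have : is_int_flow tl hd (fun e => 1 * m e + 1 * walk_chain c e).
  split; first by apply: flow_lin => //; exact: walk_chain_flow.
  move=> e; have [k1 ->] := m_int e; have [k2 ->] := walk_chain_int c e.
  by exists (k1 + k2)%Z; rewrite plus_IZR; ring.
move/m_min; rewrite -/y.
have -> : (fun e => x e - (1 * m e + 1 * walk_chain c e)) = (fun e => y e - walk_chain c e).
  by apply: functional_extensionality => e; rewrite /y; ring.
rewrite qf_sub inner_walk_chain => y_le; have c_le := qf_walk_chain_le (map_uniq c_tails).
rewrite /walk_len (eq_bigr (fun p => 1 + (-2) * oval y p)) => [|p _]; last ring.
by rewrite big_split sumR_distrr /=; lra.
Qed.

(* If [2 y] lies in the cube up to a tension, then [proj] maps that point of the cube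
   to [2 y], and [q o proj] is convex. *)
Lemma qf_le_vD_of_cube y phi : flow y -> (forall e, -1 <= 2 * y e + tension phi e <= 1) ->
  exists D : {ffun E -> bool}, qf y <= qf (vD D).
Proof.
move=> flow_y z_cube.
have proj_z : proj (fun e => 2 * y e + tension phi e) = (fun e => 2 * y e).
  apply: functional_extensionality; apply: proj_unique => [|h flow_h].
    by apply: eq_flow (flow_lin 2 0 flow_y flow_y) => e; ring.
  have d_eq e : 2 * y e + tension phi e - 2 * y e = tension phi e by ring.
  by rewrite (eq_inner d_eq (fun _ => erefl)) inner_sym inner_flow_tension.
have F_convex t a b : 0 <= t <= 1 -> qf (proj (fun e => t * a e + (1 - t) * b e))
                                     <= t * qf (proj a) + (1 - t) * qf (proj b).
  move=> t01; rewrite (functional_extensionality _ _ (proj_lin t (1 - t) a b)).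
  exact: qf_convex.
have [D le_D] := convex_cube_vertex F_convex z_cube.
by exists D; move: le_D; rewrite proj_z qf_scale /vD qf_scale; lra.
Qed.

Lemma covered_by_vD x : flow x -> exists m (D : {ffun E -> bool}),
  is_int_flow tl hd m /\ qf (fun e => x e - m e) <= qf (vD D).
Proof.
move=> flow_x; have [m [m_int m_min]] := exists_nearest_int_flow flow_x.
have [phi phi_pot] := exists_potential (nearest_cycle_ge0 m_int m_min).
have [|e|D le_D] := @qf_le_vD_of_cube (fun e => x e - m e) phi.
- by case: m_int => flow_m _; apply: eq_flow (flow_lin 1 (-1) flow_x flow_m) => e; ring.
- have := phi_pot (e, true) isT; have := phi_pot (e, false) isT.
  by rewrite /oval /tension /Defs.otail /Defs.ohead /=; lra.
- by exists m, D.
Qed.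

(** * Maximal orientations *)

Lemma qf_vD_flip D e0 (D' : E -> bool) : (forall e, D' e = if e == e0 then ~~ D e else D e) ->
  qf (vD D') = qf (vD D) - sign_chain D e0 * proj (sign_chain D) e0 + qf (proj (edge_chain e0)).
Proof.
move=> D'_flip.
have sign_D' e : sign_chain D' e = 1 * sign_chain D e + (-2 * sign_chain D e0) * edge_chain e0 e.
  rewrite /sign_chain /edge_chain D'_flip.
  by case: (eqVneq e e0) => [->|_]; case: (D e); case: (D e0) => /=; ring.
have vD_D' e : vD D' e = / 2 * (1 * proj (sign_chain D) e + (-2 * sign_chain D e0) * proj (edge_chain e0) e).
  by rewrite /vD (functional_extensionality _ _ sign_D') proj_lin.
rewrite (functional_extensionality _ _ vD_D') qf_scale qf_lin /vD qf_scale.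
rewrite (inner_sym (proj _)) -inner_proj ?inner_edge_chain; last exact: proj_flow.
have -> : -2 * sign_chain D e0 * (-2 * sign_chain D e0) = 4.
  by rewrite /sign_chain; case: (D e0); ring.
by field.
Qed.

(* Across a cut that no arc of [D] leaves, [sign_chain D] is the tension of the
   indicator of the cut, which is orthogonal to flows. *)
Lemma directed_cut_flow D (S : pred V) h :
  (forall v w, darc tl hd D v w -> S v -> S w) -> flow h ->
  \big[Rplus/0]_(e | ~~ bridge e && (S (tl e) != S (hd e))) (sign_chain D e * h e) = 0.
Proof.
move=> S_closed flow_h; rewrite big_mkcond.
apply: (etrans _ (inner_flow_tension (fun v => if S v then 1 else 0) flow_h)).
apply: eq_bigr => e _.
case nb: (bridge e) => /=; first by rewrite (flow_bridge flow_h nb); ring.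
have arc_D : darc tl hd D (if D e then tl e else hd e) (if D e then hd e else tl e).
  by apply/existsP; exists e; rewrite nb /=; case: (D e); rewrite !eqxx.
move: (S_closed _ _ arc_D); rewrite /tension /sign_chain.
by case: (D e); case: (S (tl e)); case: (S (hd e)) => //= closed; try ring; have := closed isT.
Qed.

Lemma exists_max_orientation : exists D : {ffun E -> bool},
  forall D' : E -> bool, qf (vD D') <= qf (vD D).
Proof.
have [D [_ D_max]] := @fin_argmin _ (fun _ : {ffun E -> bool} => True) (fun D => - qf (vD D))
                                  (ex_intro _ [ffun=> true] I).
exists D => D'; apply: Ropp_le_cancel.
have -> : vD D' = vD [ffun e => D' e].
  by congr vD; apply: functional_extensionality => e; rewrite ffunE.
exact: D_max.
Qed.

(* If [D] is not strongly connected, some non-bridge crosses a directed cut. Reversing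
   one edge [e] of the cut changes [q (vD D)] by [q (proj (edge_chain e))] minus a term
   that sums to [0] over the cut, so for a maximal [D] all these projections vanish. *)
Lemma max_orientation_sc D : (forall D' : E -> bool, qf (vD D') <= qf (vD D)) ->
  strongly_connected_orientation tl hd D.
Proof.
move=> D_max v w vw; apply/idPn => not_vw.
pose reach := connect (darc tl hd D) v.
have reach_closed v1 v2 : darc tl hd D v1 v2 -> reach v1 -> reach v2.
  by move=> v12 v_v1; apply: connect_trans v_v1 (connect1 v12).
have [a [b [/existsP [e0 /andP [nb0 e0_ab]] reach_a reach_b]]] :=
  connect_cross vw (connect0 _ v) not_vw.
pose X e := ~~ bridge e && (reach (tl e) != reach (hd e)).
have X_e0 : X e0.
  by rewrite /X /reach nb0; case/orP: e0_ab => /andP [/eqP -> /eqP ->]; rewrite reach_a (negbTE reach_b).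
have gain_le0 : \big[Rplus/0]_(e | X e) qf (proj (edge_chain e)) <= 0.
  apply: Rle_trans (Req_le _ _ (directed_cut_flow reach_closed (proj_flow (sign_chain D)))).
  apply: sumR_le => e _.
  have := D_max (fun e' => if e' == e then ~~ D e' else D e').
  by rewrite (qf_vD_flip (fun e' => erefl)); lra.
have /qf_eq0 proj_e0 : qf (proj (edge_chain e0)) = 0.
  apply: Rle_antisym (qf_ge0 _); apply: Rle_trans gain_le0; rewrite big_mkcond.
  have := @sumR_ge_term _ _ (fun e => if X e then qf (proj (edge_chain e)) else 0) _ (mem_index_enum e0).
  by rewrite X_e0; apply=> e _; case: (X e); [exact: qf_ge0 | lra].
have [h flow_h h_e0] := flow_through_nonbridge nb0.
have := inner_proj (edge_chain e0) flow_h; rewrite inner_edge_chain h_e0.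
by rewrite (eq_inner proj_e0 (fun _ => erefl)) inner0; lra.
Qed.

End Graph.

Theorem mainTheorem19 (V E : finType) (tl hd : E -> V)
    (Hconn : connected_graph tl hd) :
  (forall D : E -> bool, strongly_connected_orientation tl hd D ->
     exists! v : chain E, is_flow tl hd v /\ vD_prop tl hd D v) /\
  exists M : R,
    is_covering_number tl hd M /\
    is_greatest (fun r => exists (D : E -> bool) (v : chain E),
                   strongly_connected_orientation tl hd D /\
                   is_flow tl hd v /\ vD_prop tl hd D v /\ r = qf v) M.
Proof.
split=> [D D_sc|].
  exists (vD tl hd D); split=> [|v [flow_v v_circ]]; first by split; [exact: vD_flow | exact: vD_circuit].
  exact: esym (vD_unique D_sc flow_v v_circ).
have [D D_max] := exists_max_orientation tl hd.
exists (qf (vD tl hd D)); split; split.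
- move=> x flow_x; have [m [D' [m_int le_D']]] := covered_by_vD flow_x.
  by exists m; split => //; apply: Rle_trans le_D' (D_max D').
- move=> r r_covers; have [m [m_int le_m]] := r_covers _ (vD_flow tl hd D).
  exact: Rle_trans (qf_vD_le D m_int) le_m.
- exists D, (vD tl hd D); split; first exact: max_orientation_sc.
  by split; [exact: vD_flow | split; [exact: vD_circuit |]].
- move=> _ [D' [v [D'_sc [flow_v [v_circ ->]]]]].
  by rewrite (vD_unique D'_sc flow_v v_circ); apply: D_max.
Qed.
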